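(* Let $\mathbb{K}$ be a field and $\mathscr{C}$ the category whose objects are associative $\mathbb{K}$-algebras and whose morphisms $X\to Y$ are $\mathbb{K}$-algebra homomorphisms $\varphi$ such that $\varphi(X)$ is an ideal of $Y$ (this category has pullbacks, computed as in $\mathbf{Set}$). Let $M=\mathbb{Z}_2=\{0,1\}$ under addition modulo $2$ and $X$ a unital nonzero $\mathbb{K}$-algebra. Let $\beta$ be the global action of $M$ on $X\times X$ with $\beta_1(x,y)=(y,x)$, let $\iota\colon X\to X\times X$, $\iota(x)=(x,0)$, and let $\alpha$ be the restriction of $\beta$ to $X$ via $\iota$ (so $\operatorname{dom}\alpha_1=\{0\}$). Then $(\beta,\iota)$ is a universal globalization of $\alpha$, but $\iota$ is not a reflection of $\alpha$ in $\mathrm{Act}_M(\mathscr{C})$; consequently $\alpha$ has no reflection in $\mathrm{Act}_M(\mathscr{C})$.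
   Context: A partial action datum of $M$ on an object $X$ of a category with pullbacks $\mathscr{C}$ assigns to each $m\in M$ an isomorphism class of spans $[\operatorname{dom}\alpha_m,\iota_m,\alpha_m]$ with $\iota_m\colon\operatorname{dom}\alpha_m\to X$ a monomorphism and $\alpha_m\colon\operatorname{dom}\alpha_m\to X$. A global action of $M$ on $Y$ is a family of morphisms $\beta_m\colon Y\to Y$ with $\beta_e=\mathrm{id}_Y$, $\beta_n\circ\beta_m=\beta_{nm}$. A datum morphism from $\alpha$ to a global action $\gamma$ on $Z$ is a morphism $f\colon X\to Z$ with $\gamma_m\circ f\circ\iota_m=f\circ\alpha_m$ for all $m$; between global actions, datum morphisms are the $g$ with $g\circ\beta_m=\gamma_m\circ g$. $\mathrm{Act}_M(\mathscr{C})$ is the category of global actions with these morphisms. Given a global action $\beta$ on $Y$ and a monomorphism $\iota\colon X\to Y$, the restriction of $\beta$ via $\iota$ is the datum $\alpha$ on $X$ such that for each $m$ the square $\beta_m\circ\iota\circ\iota_m=\iota\circ\alpha_m$ is a pullback. A globalization of $\alpha$ is a pair $(\beta,\iota)$ with $\beta$ global on $Y$ and $\iota\colon X\to Y$ a monomorphism such that $\alpha$ is the restriction of $\beta$ via $\iota$; it is universal if for every globalization $(\gamma,\kappa)$ of $\alpha$ there is a unique datum morphism $\kappa'\colon\beta\to\gamma$ with $\kappa'\circ\iota=\kappa$. A reflection of $\alpha$ in $\mathrm{Act}_M(\mathscr{C})$ is a datum morphism $r\colon\alpha\to\beta$ with $\beta$ global such that for every datum morphism $f\colon\alpha\to\gamma$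 with $\gamma$ global there is a unique datum morphism $f'\colon\beta\to\gamma$ with $f'\circ r=f$. *)

From HB Require Import structures.
From mathcomp Require Import all_boot all_order all_algebra.
Set Implicit Arguments. Unset Strict Implicit. Unset Printing Implicit Defensive.
Import GRing.Theory.
Local Open Scope ring_scope.

Section NCAlg.
Variable K : fieldType.

Record ncalg := NCAlg {
  nc_car :> lmodType K;
  nc_mul : nc_car -> nc_car -> nc_car;
  nc_mulA : forall x y z, nc_mul x (nc_mul y z) = nc_mul (nc_mul x y) z;
  nc_mulDl : forall x y z, nc_mul (x + y) z = nc_mul x z + nc_mul y z;
  nc_mulDr : forall x y z, nc_mul x (y + z) = nc_mul x y + nc_mul x z;
  nc_mulZl : forall (a : K) x y, nc_mul (a *: x) y = a *: nc_mul x y;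
  nc_mulZr : forall (a : K) x y, nc_mul x (a *: y) = a *: nc_mul x y
}.

Definition ncalg_of_alg (A : algType K) : ncalg :=
  @NCAlg A (@GRing.mul A) (@mulrA A) (@mulrDl A) (@mulrDr A)
    (fun a x y => esym (scalerAl a x y)) (fun a x y => esym (scalerAr a x y)).

Section Prod.
Variables A B : ncalg.
Definition prod_mul (p q : (A * B)%type) : (A * B)%type :=
  (nc_mul p.1 q.1, nc_mul p.2 q.2).
Lemma prod_mulA : forall x y z, prod_mul x (prod_mul y z) = prod_mul (prod_mul x y) z.
Proof. by move=> [? ?] [? ?] [? ?]; rewrite /prod_mul /= !nc_mulA. Qed.
Lemma prod_mulDl : forall x y z, prod_mul (x + y) z = prod_mul x z + prod_mul y z.
Proof. by move=> [? ?] [? ?] [? ?]; rewrite /prod_mul /= !nc_mulDl. Qed.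
Lemma prod_mulDr : forall x y z, prod_mul x (y + z) = prod_mul x y + prod_mul x z.
Proof. by move=> [? ?] [? ?] [? ?]; rewrite /prod_mul /= !nc_mulDr. Qed.
Lemma prod_mulZl : forall (a : K) x y, prod_mul (a *: x) y = a *: prod_mul x y.
Proof. by move=> a [? ?] [? ?]; rewrite /prod_mul /= !nc_mulZl. Qed.
Lemma prod_mulZr : forall (a : K) x y, prod_mul x (a *: y) = a *: prod_mul x y.
Proof. by move=> a [? ?] [? ?]; rewrite /prod_mul /= !nc_mulZr. Qed.
Definition nc_prod : ncalg :=
  @NCAlg (A * B)%type prod_mul prod_mulA prod_mulDl prod_mulDr prod_mulZl prod_mulZr.
End Prod.

(** Morphisms of C: K-algebra homomorphisms whose image is a (two-sided)
    ideal of the codomain.  (The image is a subspace by linearity.) *)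
Definition nc_hom (A B : ncalg) (f : A -> B) : Prop :=
  [/\ forall (a : K) (x y : A), f (a *: x + y) = a *: f x + f y,
      forall x y : A, f (nc_mul x y) = nc_mul (f x) (f y),
      forall (x : A) (y : B), exists x' : A, nc_mul y (f x) = f x' &
      forall (x : A) (y : B), exists x' : A, nc_mul (f x) y = f x'].

Definition nc_mono (A B : ncalg) (f : A -> B) : Prop :=
  nc_hom f /\
  forall (Z : ncalg) (g h : Z -> A), nc_hom g -> nc_hom h ->
    f \o g =1 f \o h -> g =1 h.

Definition nc_pullback (A B C P : ncalg) (f : A -> C) (g : B -> C)
    (p1 : P -> A) (p2 : P -> B) : Prop :=
  [/\ nc_hom p1, nc_hom p2, f \o p1 =1 g \o p2 &
      forall (Q : ncalg) (q1 : Q -> A) (q2 : Q -> B),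
        nc_hom q1 -> nc_hom q2 -> f \o q1 =1 g \o q2 ->
        exists u : Q -> P,
          [/\ nc_hom u, p1 \o u =1 q1, p2 \o u =1 q2 &
              forall v : Q -> P, nc_hom v -> p1 \o v =1 q1 -> p2 \o v =1 q2 ->
                v =1 u]].

Section Actions.
Variables (M : Type) (op : M -> M -> M) (e : M).

(** A partial action datum of M on X: for each m a span
    dom_m --inc_m--> X, dom_m --act_m--> X with inc_m a monomorphism.
    (Spans are taken as representatives; all notions below are invariant
    under isomorphism of spans.) *)
Record datum (X : ncalg) := Datum {
  ddom : M -> ncalg;
  dinc : forall m, ddom m -> X;
  dact : forall m, ddom m -> X;
  dinc_mono : forall m, nc_mono (@dinc m);
  dact_hom : forall m, nc_hom (@dact m)
}.
Arguments ddom {X} d m.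
Arguments dinc {X} d m _.
Arguments dact {X} d m _.

Definition is_global (Y : ncalg) (b : M -> Y -> Y) : Prop :=
  [/\ forall m, nc_hom (b m), b e =1 id &
      forall n m, b n \o b m =1 b (op n m)].

Definition datum_mor (X Z : ncalg) (a : datum X) (g : M -> Z -> Z)
    (f : X -> Z) : Prop :=
  nc_hom f /\ forall m, g m \o f \o dinc a m =1 f \o dact a m.

Definition global_mor (Y Z : ncalg) (b : M -> Y -> Y) (g : M -> Z -> Z)
    (f : Y -> Z) : Prop :=
  nc_hom f /\ forall m, f \o b m =1 g m \o f.

Definition is_restriction (X Y : ncalg) (a : datum X) (b : M -> Y -> Y)
    (i : X -> Y) : Prop :=
  forall m, nc_pullback (b m \o i) i (dinc a m) (dact a m).

Definition is_globalization (X Y : ncalg) (a : datum X) (b : M -> Y -> Y)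
    (i : X -> Y) : Prop :=
  [/\ is_global b, nc_mono i & is_restriction a b i].

Definition is_universal_globalization (X Y : ncalg) (a : datum X)
    (b : M -> Y -> Y) (i : X -> Y) : Prop :=
  is_globalization a b i /\
  forall (Z : ncalg) (g : M -> Z -> Z) (k : X -> Z),
    is_globalization a g k ->
    exists k' : Y -> Z,
      [/\ global_mor b g k', k' \o i =1 k &
          forall k'' : Y -> Z, global_mor b g k'' -> k'' \o i =1 k -> k'' =1 k'].

Definition is_reflection (X Y : ncalg) (a : datum X) (b : M -> Y -> Y)
    (r : X -> Y) : Prop :=
  [/\ is_global b, datum_mor a b r &
      forall (Z : ncalg) (g : M -> Z -> Z) (f : X -> Z),
        is_global g -> datum_mor a g f ->
        exists f' : Y -> Z,
          [/\ global_mor b g f', f' \o r =1 f &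
              forall f'' : Y -> Z, global_mor b g f'' -> f'' \o r =1 f ->
                f'' =1 f']].

Definition has_reflection (X : ncalg) (a : datum X) : Prop :=
  exists (Y : ncalg) (b : M -> Y -> Y) (r : X -> Y), is_reflection a b r.

End Actions.
End NCAlg.

Definition Z2op (n m : 'Z_2) : 'Z_2 := n + m.

Definition swap_action (K : fieldType) (X : ncalg K) (m : 'Z_2)
    (p : nc_prod X X) : nc_prod X X :=
  if m == 0 then p else (p.2, p.1).

Definition inl_zero (K : fieldType) (X : ncalg K) (x : X) : nc_prod X X :=
  (x, 0).

(* Let (g, k) be any globalization of alpha on Z.  The pullback of g_1 \o k
   and k, computed as in Set, is dom alpha_1 = 0, so the ideals k(X) and
   g_1(k(X)) of Z meet only in 0 and therefore annihilate each other.  Hence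
   (x, y) |-> k x + g_1 (k y) is an equivariant morphism extending k along
   iota, and the only one since (x, y) = iota x + beta_1 (iota y).
   No reflection r : alpha -> (Y, b) exists: its comparison map to the trivial
   action on X is a left inverse of r invariant under b_1, which forces
   r 1 * b_1 (r 1) = r 1 in the ideal r(X), whereas its comparison map to the
   swap action sends the left side to (1, 0)(0, 1) = 0 and the right side to
   (1, 0). *)

From HB Require Import structures.
From mathcomp Require Import all_boot all_order all_algebra.
Set Implicit Arguments. Unset Strict Implicit. Unset Printing Implicit Defensive.
Import GRing.Theory.
Local Open Scope ring_scope.

Section NcHomTheory.
Variable K : fieldType.

Lemma nc_mul0r (A : ncalg K) (x : A) : nc_mul 0 x = 0.
Proof. by apply: (@addrI _ (nc_mul 0 x)); rewrite -nc_mulDl !addr0. Qed.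

Lemma nc_mulr0 (A : ncalg K) (x : A) : nc_mul x 0 = 0.
Proof. by apply: (@addrI _ (nc_mul x 0)); rewrite -nc_mulDr !addr0. Qed.

Section Hom.
Variables (A B : ncalg K) (f : A -> B).
Hypothesis hf : nc_hom f.

Lemma nc_homD x y : f (x + y) = f x + f y.
Proof. by case: hf => lin _ _ _; have := lin 1 x y; rewrite !scale1r. Qed.

Lemma nc_hom0 : f 0 = 0.
Proof. by apply: (@addrI _ (f 0)); rewrite -nc_homD !addr0. Qed.

Lemma nc_homZ a x : f (a *: x) = a *: f x.
Proof.
by case: hf => lin _ _ _; have := lin a x 0; rewrite !addr0 nc_hom0 addr0.
Qed.

Lemma nc_homM x y : f (nc_mul x y) = nc_mul (f x) (f y).
Proof. by case: hf. Qed.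

Lemma nc_hom_idealL x y : exists x', nc_mul y (f x) = f x'.
Proof. by case: hf => _ _ + _; apply. Qed.

Lemma nc_hom_idealR x y : exists x', nc_mul (f x) y = f x'.
Proof. by case: hf => _ _ _; apply. Qed.

End Hom.

Lemma nc_hom_id (A : ncalg K) : nc_hom (@id A).
Proof. by split=> // x y; [exists (nc_mul y x) | exists (nc_mul x y)]. Qed.

Lemma nc_hom_comp_surj (A B C : ncalg K) (f : A -> B) (g : B -> C) :
  nc_hom f -> nc_hom g -> (forall z, exists y, g y = z) -> nc_hom (g \o f).
Proof.
move=> hf hg g_surj; split=> /=.
- by move=> a x y; rewrite (nc_homD hf) (nc_homZ hf) (nc_homD hg) (nc_homZ hg).
- by move=> x y; rewrite (nc_homM hf) (nc_homM hg).
- move=> x z; have [y <-] := g_surj z; have [x' ex'] := nc_hom_idealL hf x y.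
  by exists x'; rewrite -(nc_homM hg) ex'.
- move=> x z; have [y <-] := g_surj z; have [x' ex'] := nc_hom_idealR hf x y.
  by exists x'; rewrite -(nc_homM hg) ex'.
Qed.

End NcHomTheory.

Section SubNcalg.
Variables (K : fieldType) (A : ncalg K) (P : pred A).
Hypothesis P0 : P 0.
Hypothesis P_lin : forall (a : K) x y, P x -> P y -> P (a *: x + y).
Hypothesis P_mul : forall x y, P x -> P y -> P (nc_mul x y).

Lemma sub_submod_closed : GRing.submod_closed P.
Proof. by split; [exact: P0 | exact: P_lin]. Qed.

HB.instance Definition _ :=
  GRing.isSubmodClosed.Build K A P sub_submod_closed.

Definition sub_type := {x : A | x \in P}.
HB.instance Definition _ :=
  [isSub of sub_type for (@sval A (fun x => x \in P))].
HB.instance Definition _ := [Choice of sub_type by <:].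
HB.instance Definition _ := [SubChoice_isSubLmodule of sub_type by <:].

Definition sub_mul (x y : sub_type) : sub_type :=
  exist _ (nc_mul (val x) (val y)) (P_mul (valP x) (valP y)).

Lemma sub_mulA x y z : sub_mul x (sub_mul y z) = sub_mul (sub_mul x y) z.
Proof. by apply: val_inj; rewrite /= nc_mulA. Qed.
Lemma sub_mulDl x y z : sub_mul (x + y) z = sub_mul x z + sub_mul y z.
Proof. by apply: val_inj; rewrite /= nc_mulDl. Qed.
Lemma sub_mulDr x y z : sub_mul x (y + z) = sub_mul x y + sub_mul x z.
Proof. by apply: val_inj; rewrite /= nc_mulDr. Qed.
Lemma sub_mulZl (a : K) x y : sub_mul (a *: x) y = a *: sub_mul x y.
Proof. by apply: val_inj; rewrite /= nc_mulZl. Qed.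
Lemma sub_mulZr (a : K) x y : sub_mul x (a *: y) = a *: sub_mul x y.
Proof. by apply: val_inj; rewrite /= nc_mulZr. Qed.

Definition sub_ncalg : ncalg K :=
  NCAlg sub_mulA sub_mulDl sub_mulDr sub_mulZl sub_mulZr.

End SubNcalg.

Section SetPullback.
Variables (K : fieldType) (A B C : ncalg K) (f : A -> C) (g : B -> C).
Hypotheses (hf : nc_hom f) (hg : nc_hom g).

Definition pb_pred : pred (nc_prod A B) := fun p => f p.1 == g p.2.

Lemma pb_pred0 : pb_pred 0.
Proof. by rewrite /pb_pred /= (nc_hom0 hf) (nc_hom0 hg). Qed.

Lemma pb_pred_lin (a : K) p q : pb_pred p -> pb_pred q -> pb_pred (a *: p + q).
Proof.
move=> /eqP ep /eqP eq; apply/eqP => /=.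
by rewrite (nc_homD hf) (nc_homZ hf) (nc_homD hg) (nc_homZ hg) ep eq.
Qed.

Lemma pb_pred_mul p q : pb_pred p -> pb_pred q -> pb_pred (nc_mul p q).
Proof.
by move=> /eqP ep /eqP eq; apply/eqP; rewrite /= (nc_homM hf) (nc_homM hg) ep eq.
Qed.

Definition set_pullback : ncalg K := sub_ncalg pb_pred0 pb_pred_lin pb_pred_mul.

Definition pb_fst (s : set_pullback) : A := (val s).1.
Definition pb_snd (s : set_pullback) : B := (val s).2.

Lemma pb_comm s : f (pb_fst s) = g (pb_snd s).
Proof. exact/eqP/(valP s). Qed.

Lemma pb_pairP a b : f a = g b -> exists s, pb_fst s = a /\ pb_snd s = b.
Proof.
by move=> /eqP e; exists (exist (fun p => p \in pb_pred) (a, b) e).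
Qed.

Lemma pb_fst_hom : nc_hom pb_fst.
Proof.
split=> // s y.
- have [b' eb'] := nc_hom_idealL hg (pb_snd s) (f y).
  have /pb_pairP[s' [<- _]] : f (nc_mul y (pb_fst s)) = g b'.
    by rewrite (nc_homM hf) pb_comm.
  by exists s'.
- have [b' eb'] := nc_hom_idealR hg (pb_snd s) (f y).
  have /pb_pairP[s' [<- _]] : f (nc_mul (pb_fst s) y) = g b'.
    by rewrite (nc_homM hf) pb_comm.
  by exists s'.
Qed.

Lemma pb_snd_hom : nc_hom pb_snd.
Proof.
split=> // s y.
- have [a' ea'] := nc_hom_idealL hf (pb_fst s) (g y).
  have /pb_pairP[s' [_ <-]] : f a' = g (nc_mul y (pb_snd s)).
    by rewrite (nc_homM hg) -pb_comm.
  by exists s'.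
- have [a' ea'] := nc_hom_idealR hf (pb_fst s) (g y).
  have /pb_pairP[s' [_ <-]] : f a' = g (nc_mul (pb_snd s) y).
    by rewrite (nc_homM hg) -pb_comm.
  by exists s'.
Qed.

Lemma nc_pullback_surj (P : ncalg K) (p1 : P -> A) (p2 : P -> B) a b :
  nc_pullback f g p1 p2 -> f a = g b -> exists c, p1 c = a /\ p2 c = b.
Proof.
case=> _ _ _ univ /pb_pairP [s [<- <-]].
have [u [_ p1u p2u _]] := univ _ _ _ pb_fst_hom pb_snd_hom pb_comm.
by exists (u s); split; [exact: p1u | exact: p2u].
Qed.

End SetPullback.

Lemma Z2_cases (m : 'Z_2) : m = 0 \/ m = 1.
Proof. by case: m => [[|[|m]] Hm]; [left | right | done]; apply: val_inj. Qed.

Lemma trivial_action_global (K : fieldType) (M : Type) (op : M -> M -> M) (e : M)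
    (X : ncalg K) : is_global op e (fun _ => @id X).
Proof. by split=> // m; exact: nc_hom_id. Qed.

Lemma global_Z2_invol (K : fieldType) (Y : ncalg K) (b : 'Z_2 -> Y -> Y) :
  is_global Z2op 0 b -> involutive (b 1).
Proof.
case=> _ b0 bM y; have := bM 1 1 y; have -> : Z2op 1 1 = 0 by apply: val_inj.
by rewrite b0.
Qed.

Lemma restriction_datum_mor (K : fieldType) (M : Type) (X Y : ncalg K)
    (a : datum M X) (b : M -> Y -> Y) (i : X -> Y) :
  nc_hom i -> is_restriction a b i -> datum_mor a b i.
Proof. by move=> hi res; split=> // m; case: (res m). Qed.

Section SwapExample.
Variables (K : fieldType) (X : algType K).
Local Notation XA := (ncalg_of_alg X).
Local Notation sw := (@swap_action K XA).
Local Notation inl := (@inl_zero K XA).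

Lemma swap_action0 p : sw 0 p = p.
Proof. by rewrite /swap_action eqxx. Qed.

Lemma swap_action_hom m : nc_hom (sw m).
Proof.
case: (Z2_cases m) => ->; first by rewrite /swap_action eqxx; exact: nc_hom_id.
split.
- by move=> a [x1 x2] [y1 y2].
- by move=> [x1 x2] [y1 y2].
- by move=> [x1 x2] [y1 y2]; exists (nc_mul y2 x1, nc_mul y1 x2).
- by move=> [x1 x2] [y1 y2]; exists (nc_mul x1 y2, nc_mul x2 y1).
Qed.

Lemma swap_action_global : is_global Z2op 0 sw.
Proof.
split=> [|p|n m p]; [exact: swap_action_hom | exact: swap_action0 |].
by case: (Z2_cases n) => ->; case: (Z2_cases m) => ->; case: p.
Qed.

Lemma inl_zero_hom : nc_hom inl.
Proof.
split.
- by move=> a x y; rewrite /inl_zero /=; congr pair; rewrite /= scaler0 addr0.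
- by move=> x y; rewrite /inl_zero /= /prod_mul /= mul0r.
- by move=> x [y1 y2]; exists (y1 * x); rewrite /inl_zero /= /prod_mul /= mulr0.
- by move=> x [y1 y2]; exists (x * y1); rewrite /inl_zero /= /prod_mul /= mul0r.
Qed.

Lemma inl_zero_mono : nc_mono inl.
Proof. by split=> [|Z g h _ _ e x]; [exact: inl_zero_hom | case: (e x)]. Qed.

Variable alpha : datum 'Z_2 XA.
Hypothesis alpha_res : is_restriction alpha sw inl.

Lemma restriction_dinc0 (p : ddom alpha 0) : dinc p = dact p.
Proof. by case: (alpha_res 0) => _ _ /(_ p) /=; rewrite swap_action0; case. Qed.

Lemma restriction_dinc1 (p : ddom alpha 1) : dinc p = 0.
Proof. by case: (alpha_res 1) => _ _ /(_ p); case. Qed.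

Lemma restriction_dact1 (p : ddom alpha 1) : dact p = 0.
Proof. by case: (alpha_res 1) => _ _ /(_ p); case. Qed.

Lemma swap_globalization : is_globalization Z2op 0 alpha sw inl.
Proof. by split; [exact: swap_action_global | exact: inl_zero_mono |]. Qed.

Section Universality.
Variables (Z : ncalg K) (g : 'Z_2 -> Z -> Z) (k : XA -> Z).
Hypothesis kg_glob : is_globalization Z2op 0 alpha g k.

Let g_global : is_global Z2op 0 g. Proof. by case: kg_glob. Qed.
Let k_hom : nc_hom k. Proof. by case: kg_glob => _ []. Qed.
Let g1_hom : nc_hom (g 1). Proof. by case: g_global. Qed.
Let g1K : involutive (g 1). Proof. exact: global_Z2_invol. Qed.
Let g1k_hom : nc_hom (g 1 \o k).
Proof. by apply: nc_hom_comp_surj => // z; exists (g 1 z). Qed.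

Lemma k_meet_g1k a b : g 1 (k a) = k b -> g 1 (k a) = 0.
Proof.
move=> e; have [_ _ k_res] := kg_glob.
have [c [<- _]] := nc_pullback_surj g1k_hom k_hom (k_res 1) e.
by rewrite restriction_dinc1 (nc_hom0 k_hom) (nc_hom0 g1_hom).
Qed.

Lemma mul_k_g1k_eq0 x y : nc_mul (k x) (g 1 (k y)) = 0.
Proof.
have [a ea] := nc_hom_idealR k_hom x (g 1 (k y)).
have [b /= eb] := nc_hom_idealL g1k_hom y (k x).
by rewrite eb (k_meet_g1k (b := a)) // -eb.
Qed.

Lemma mul_g1k_k_eq0 x y : nc_mul (g 1 (k y)) (k x) = 0.
Proof.
have [a ea] := nc_hom_idealL k_hom x (g 1 (k y)).
have [b /= eb] := nc_hom_idealR g1k_hom y (k x).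
by rewrite eb (k_meet_g1k (b := a)) // -eb.
Qed.

Definition glob_ext (p : nc_prod XA XA) : Z := k p.1 + g 1 (k p.2).

Lemma glob_ext_hom : nc_hom glob_ext.
Proof.
split.
- move=> a [x1 x2] [y1 y2]; rewrite /glob_ext /= scalerDr addrACA.
  by rewrite !(nc_homD k_hom) !(nc_homZ k_hom) (nc_homD g1_hom) (nc_homZ g1_hom).
- move=> [x1 x2] [y1 y2]; rewrite /glob_ext /= /prod_mul /=.
  rewrite nc_mulDl !nc_mulDr mul_k_g1k_eq0 mul_g1k_k_eq0 addr0 add0r.
  by rewrite !(nc_homM k_hom) (nc_homM g1_hom).
- move=> [x1 x2] y; rewrite /glob_ext nc_mulDr.
  have [x1' e1] := nc_hom_idealL k_hom x1 y.
  have [x2' e2] := nc_hom_idealL g1k_hom x2 y.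
  by exists (x1', x2'); rewrite e1 e2.
- move=> [x1 x2] y; rewrite /glob_ext nc_mulDl.
  have [x1' e1] := nc_hom_idealR k_hom x1 y.
  have [x2' e2] := nc_hom_idealR g1k_hom x2 y.
  by exists (x1', x2'); rewrite e1 e2.
Qed.

Lemma glob_ext_mor : global_mor sw g glob_ext.
Proof.
split=> [|m [x1 x2]]; first exact: glob_ext_hom.
case: g_global => _ g0 _.
case: (Z2_cases m) => -> /=; first by rewrite swap_action0 g0.
by rewrite /glob_ext /= (nc_homD g1_hom) g1K addrC.
Qed.

Lemma glob_ext_inl : glob_ext \o inl =1 k.
Proof.
by move=> x; rewrite /glob_ext /= (nc_hom0 k_hom) (nc_hom0 g1_hom) addr0.
Qed.

Lemma glob_ext_unique (k' : nc_prod XA XA -> Z) :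
  global_mor sw g k' -> k' \o inl =1 k -> k' =1 glob_ext.
Proof.
case=> k'_hom k'_mor k'_inl [x1 x2]; rewrite /glob_ext /=.
rewrite -(k'_inl x1 : k' _ = _) -(k'_inl x2 : k' _ = _).
rewrite -(k'_mor 1 _ : k' _ = g 1 (k' _)) -(nc_homD k'_hom); congr k'.
by rewrite /inl_zero /=; congr pair; rewrite /= ?addr0 ?add0r.
Qed.

End Universality.

Lemma swap_universal_globalization :
  is_universal_globalization Z2op 0 alpha sw inl.
Proof.
split=> [|Z g k kg_glob]; first exact: swap_globalization.
exists (glob_ext g k); split; [exact: glob_ext_mor | exact: glob_ext_inl |].
by move=> k'; exact: glob_ext_unique.
Qed.

Lemma trivial_datum_mor : datum_mor alpha (fun _ => id) id.
Proof.
split=> [|m]; first exact: nc_hom_id.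
case: (Z2_cases m) => -> p /=; first exact: restriction_dinc0.
by rewrite restriction_dinc1 restriction_dact1.
Qed.

Section NoReflection.
Variables (Y : ncalg K) (b : 'Z_2 -> Y -> Y) (r : XA -> Y).
Hypothesis r_refl : is_reflection Z2op 0 alpha b r.

Lemma reflection_mul_swap1 : nc_mul (r 1) (b 1 (r 1)) = r 1.
Proof.
case: r_refl => _ [r_hom _] univ.
have [h [[h_hom h_mor] h_r _]] :=
  univ _ _ _ (trivial_action_global _ _ _) trivial_datum_mor.
have [x' ex'] := nc_hom_idealR r_hom 1 (b 1 (r 1)).
rewrite ex'; congr r.
rewrite -(h_r x' : h (r x') = x') -ex' (nc_homM h_hom).
by rewrite (h_mor 1 (r 1) : h (b 1 _) = h _) (h_r 1 : h (r 1) = 1) /= mulr1.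
Qed.

Lemma reflection_false : False.
Proof.
case: r_refl => _ _ univ.
have [f [[f_hom f_mor] f_r _]] := univ _ _ _ swap_action_global
  (restriction_datum_mor inl_zero_hom alpha_res).
have f_r1 : f (r 1) = (1, 0) := f_r 1.
have := congr1 f reflection_mul_swap1.
rewrite (nc_homM f_hom) (f_mor 1 (r 1) : f (b 1 _) = sw 1 (f _)) f_r1 /=.
by rewrite /prod_mul /= mulr0 mul0r => -[/esym/eqP]; rewrite oner_eq0.
Qed.

End NoReflection.

Lemma no_reflection : ~ has_reflection Z2op 0 alpha.
Proof. by case=> Y [b [r r_refl]]; exact: reflection_false r_refl. Qed.

End SwapExample.

Theorem mainTheorem19 (K : fieldType) (X : algType K)
    (alpha : datum 'Z_2 (ncalg_of_alg X)) :
  is_restriction alpha (@swap_action K (ncalg_of_alg X))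
    (@inl_zero K (ncalg_of_alg X)) ->
  is_universal_globalization Z2op 0 alpha (@swap_action K (ncalg_of_alg X))
    (@inl_zero K (ncalg_of_alg X)) /\
  ~ is_reflection Z2op 0 alpha (@swap_action K (ncalg_of_alg X))
      (@inl_zero K (ncalg_of_alg X)) /\
  ~ has_reflection Z2op 0 alpha.
Proof.
move=> alpha_res; split; first exact: swap_universal_globalization.
split; last exact: no_reflection.
by move=> refl; exact: (reflection_false alpha_res refl).
Qed.
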